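(* Let $X$ be a locally compact Hausdorff totally disconnected space, $G$ a discrete group, $K$ a field, $\phi=(\phi_g,X_g,X)_{g\in G}$ a partial action of $G$ on $X$ (with $X_g$ open), and $I$ an ideal of $C_K(X)\rtimes_\phi G$. With $V_I=\bigcup\{\operatorname{supp}(f): f\delta_\varepsilon\in I\}$, one has $C_K(V_I)\rtimes_{\phi|_{V_I}}G\subseteq I$, and $C_K(V_I)\rtimes_{\phi|_{V_I}}G$ is the largest graded ideal of $C_K(X)\rtimes_\phi G$ contained in $I$.
   Context: A partial action of $G$ (identity $\varepsilon$) on a topological space $X$ is $(\phi_g,X_g,X)_{g\in G}$ with $X_g$ open, homeomorphisms $\phi_g:X_{g^{-1}}\to X_g$, and (i) $X_\varepsilon=X$, $\phi_\varepsilon=\operatorname{id}$; (ii) $\phi_g(X_{g^{-1}}\cap X_h)=X_g\cap X_{gh}$; (iii) $\phi_g\phi_h(x)=\phi_{gh}(x)$ for $x\in X_{h^{-1}}\cap X_{h^{-1}g^{-1}}$. $V\subseteq X$ is invariant if $\phi_{g^{-1}}(X_g\cap V)\subseteq X_{g^{-1}}\cap V$ for all $g$ (and $V_I$ is open invariant). $C_K(Y)$ is the algebra of compactly supported locally constant functions $Y\to K$; $C_K(W)$ for open $W$ is the ideal of functions vanishing off $W$; $\phi_g(f)=f\circ\phi_{g^{-1}}$. The partial skew group ring $C_K(X)\rtimes_\phi G$ consists of finite sums $\sum a_g\delta_g$, $a_g\in C_K(X_g)$, with product $(a_g\delta_g)(b_h\delta_h)=\phi_g(\phi_{g^{-1}}(a_g)b_h)\delta_{gh}$,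 graded by $\deg(a_g\delta_g)=g$; for open invariant $V$, $C_K(V)\rtimes_{\phi|_V}G=\{\sum a_g\delta_g: a_g\in C_K(V\cap X_g)\}$. An ideal is graded if it is the direct sum of its intersections with the homogeneous components. *)

From HB Require Import structures.
From mathcomp Require Import all_boot all_order all_algebra.
From Stdlib Require Import List ClassicalEpsilon.
Set Implicit Arguments. Unset Strict Implicit. Unset Printing Implicit Defensive.
Import GRing.Theory.
Local Open Scope ring_scope.

Definition pif {A : Type} (P : Prop) (a b : A) : A :=
  if excluded_middle_informative P then a else b.

Record topology (X : Type) := Topology {
  is_open : (X -> Prop) -> Prop;
  open_full : is_open (fun _ => True);
  open_inter : forall U V, is_open U -> is_open V -> is_open (fun x => U x /\ V x);
  open_union : forall (I : Type) (F : I -> X -> Prop),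
      (forall i, is_open (F i)) -> is_open (fun x => exists i, F i x)
}.

Section Topo.
Variables (X : Type) (T : topology X).

Definition compact (A : X -> Prop) : Prop :=
  forall (I : Type) (F : I -> X -> Prop),
    (forall i, is_open T (F i)) -> (forall x, A x -> exists i, F i x) ->
    exists s : list I, forall x, A x -> exists i, In i s /\ F i x.

Definition closure (A : X -> Prop) : X -> Prop :=
  fun x => forall U, is_open T U -> U x -> exists y, U y /\ A y.

Definition hausdorff : Prop :=
  forall x y : X, x <> y -> exists U V, is_open T U /\ is_open T V /\ U x /\ V y /\
    (forall z, ~ (U z /\ V z)).

Definition locally_compact : Prop :=
  forall x : X, exists U C, is_open T U /\ U x /\ compact C /\ (forall y, U y -> C y).

Definition connected (A : X -> Prop) : Prop :=
  ~ (exists U V, is_open T U /\ is_open T V /\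
       (forall x, A x -> U x \/ V x) /\ (exists x, A x /\ U x) /\
       (exists x, A x /\ V x) /\ (forall x, ~ (A x /\ U x /\ V x))).

Definition totally_disconnected : Prop :=
  forall A : X -> Prop, connected A -> forall x y, A x -> A y -> x = y.
End Topo.

Record group_str (G : Type) := GroupStr {
  gmul : G -> G -> G;
  ginv : G -> G;
  gone : G;
  gmulA : forall a b c, gmul a (gmul b c) = gmul (gmul a b) c;
  gmul1 : forall a, gmul gone a = a;
  gmulr1 : forall a, gmul a gone = a;
  gmulV : forall a, gmul (ginv a) a = gone;
  gmulrV : forall a, gmul a (ginv a) = gone
}.

(* dom g = X_g ;  act g = phi_g, meaningful on X_{g^{-1}} *)
Record partial_action (X : Type) (T : topology X) (G : Type) (Gs : group_str G) :=
  PartialAction {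
  dom : G -> X -> Prop;
  act : G -> X -> X;
  dom_open : forall g, is_open T (dom g);
  act_into : forall g x, dom (ginv Gs g) x -> dom g (act g x);
  act_inj : forall g x y, dom (ginv Gs g) x -> dom (ginv Gs g) y ->
      act g x = act g y -> x = y;
  act_onto : forall g y, dom g y -> exists x, dom (ginv Gs g) x /\ act g x = y;
  act_cont : forall g U, is_open T U ->
      is_open T (fun x => dom (ginv Gs g) x /\ U (act g x));
  act_openmap : forall g U, is_open T U ->
      is_open T (fun y => exists x, dom (ginv Gs g) x /\ U x /\ act g x = y);
  dom_one : forall x, dom (gone Gs) x;
  act_one : forall x, act (gone Gs) x = x;
  act_dom : forall g h y,
      (dom g y /\ dom (gmul Gs g h) y) <->
      (exists x, dom (ginv Gs g) x /\ dom h x /\ act g x = y);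
  act_comp : forall g h x, dom (ginv Gs h) x ->
      dom (gmul Gs (ginv Gs h) (ginv Gs g)) x ->
      act g (act h x) = act (gmul Gs g h) x
}.

Section Alg.
Variables (X : Type) (T : topology X) (K : fieldType).

Definition supp (f : X -> K) : X -> Prop := fun x => f x <> 0.

Definition locally_constant (f : X -> K) : Prop :=
  forall x, exists U, is_open T U /\ U x /\ (forall y, U y -> f y = f x).

Definition in_CK (f : X -> K) : Prop :=
  locally_constant f /\ compact T (closure T (supp f)).

Definition in_CKW (W : X -> Prop) (f : X -> K) : Prop :=
  in_CK f /\ (forall x, ~ W x -> f x = 0).

Variables (G : Type) (Gs : group_str G) (phi : partial_action T Gs).

Definition phi_fun (g : G) (f : X -> K) : X -> K :=
  fun x => pif (dom phi g x) (f (act phi (ginv Gs g) x)) 0.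

(* elements of the partial pskew group ring: coefficient families a : G -> (X -> K),
   a g being the coefficient of delta_g *)
Definition pskew := G -> X -> K.

Definition supp_list (a : pskew) (s : list G) : Prop :=
  NoDup s /\ forall g, ~ In g s -> forall x, a g x = 0.

Definition in_skew (a : pskew) : Prop :=
  (exists s, supp_list a s) /\ forall g, in_CKW (dom phi g) (a g).

(* C_K(V) ⋊ G for V : elements with a_g in C_K(V ∩ X_g) *)
Definition in_skew_V (V : X -> Prop) (a : pskew) : Prop :=
  (exists s, supp_list a s) /\
  forall g, in_CKW (fun x => V x /\ dom phi g x) (a g).

Definition skew0 : pskew := fun _ _ => 0.
Definition skew_add (a b : pskew) : pskew := fun g x => a g x + b g x.
Definition skew_opp (a : pskew) : pskew := fun g x => - a g x.

(* product, computed using a support list s of a: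
   (a*b)_k = sum_{g in s} phi_g(phi_{g^{-1}}(a_g) b_{g^{-1}k}) *)
Definition skew_mul (s : list G) (a b : pskew) : pskew :=
  fun k x => \sum_(g <- s)
    phi_fun g (fun y => phi_fun (ginv Gs g) (a g) y * b (gmul Gs (ginv Gs g) k) y) x.

Definition is_ideal (J : pskew -> Prop) : Prop :=
  (forall a, J a -> in_skew a) /\
  J skew0 /\
  (forall a b, J a -> J b -> J (skew_add a b)) /\
  (forall a, J a -> J (skew_opp a)) /\
  (forall a b s, in_skew a -> supp_list a s -> J b -> J (skew_mul s a b)) /\
  (forall a b s, J a -> supp_list a s -> in_skew b -> J (skew_mul s a b)).

Definition hom_comp (g : G) (a : pskew) : pskew :=
  fun h => pif (h = g) (a g) (fun _ => 0).

(* graded: J is the sum of its intersections with the homogeneous components,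
   i.e. every homogeneous component of an element of J lies in J *)
Definition is_graded (J : pskew -> Prop) : Prop :=
  forall a g, J a -> J (hom_comp g a).

Definition delta_one (f : X -> K) : pskew :=
  fun h => pif (h = gone Gs) f (fun _ => 0).

Definition V_of (I : pskew -> Prop) : X -> Prop :=
  fun x => exists f, I (delta_one f) /\ supp f x.

End Alg.

(* For every [f delta_1] in [I] and every [h] with [supp h] inside [supp f], the product
   [f delta_1 * (h / f) delta_g = h delta_g] lies in [I].  The support of a coefficient of
   [C_K(V_I) ⋊ G] is compact and covered by the open sets [supp f], so it splits into
   finitely many such pieces: this gives [C_K(V_I) ⋊ G <= I].  Conversely, whenever
   [F delta_{g^-1}] lies in an ideal [J], so does
   [phi_g(1_{supp F}) delta_g * F delta_{g^-1} = phi_g(F) delta_1].  For [J = I] this makes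
   [V_I] invariant, hence [C_K(V_I) ⋊ G] an ideal; for a graded [J <= I] it puts the
   support of every coefficient of [J] inside [V_I]. *)

From Pilot Require Import Defs.
From HB Require Import structures.
From mathcomp Require Import all_boot all_order all_algebra.
From Stdlib Require Import List ClassicalEpsilon Classical FunctionalExtensionality PropExtensionality.
Set Implicit Arguments. Unset Strict Implicit. Unset Printing Implicit Defensive.
Import GRing.Theory.
Local Open Scope ring_scope.

Lemma pif_T {A : Type} (P : Prop) (a b : A) : P -> pif P a b = a.
Proof. by rewrite /pif; case: excluded_middle_informative. Qed.

Lemma pif_F {A : Type} (P : Prop) (a b : A) : ~ P -> pif P a b = b.
Proof. by rewrite /pif; case: excluded_middle_informative. Qed.

Lemma In_pmap_id (I : Type) (s : list (option I)) (i : I) :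
  In (Some i) s -> In i (pmap id s).
Proof.
elim: s => [|[j|] s IH] //=; first by case=> [[->]|/IH]; [left | right].
by case=> [|/IH].
Qed.

Lemma sum_In_eq0 (K : fieldType) (I : Type) (s : list I) (F : I -> K) :
  (forall i, In i s -> F i = 0) -> \sum_(i <- s) F i = 0.
Proof.
elim: s => [|i s IH] Hs; first by rewrite big_nil.
by rewrite big_cons Hs ?IH ?add0r //; [move=> j Hj; apply: Hs; right | left].
Qed.

Section Topology.
Variables (X : Type) (T : topology X).

Lemma open_ext (A B : X -> Prop) : (forall x, A x <-> B x) -> is_open T A -> is_open T B.
Proof.
move=> AB; suff -> : B = A by [].
apply: functional_extensionality => x; apply: propositional_extensionality.
exact: iff_sym.
Qed.

Lemma open_nbhd (A : X -> Prop) :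
  (forall x, A x -> exists U, is_open T U /\ U x /\ forall y, U y -> A y) -> is_open T A.
Proof.
move=> nbhdA.
pose Ix := {p : X * (X -> Prop) | is_open T p.2 /\ p.2 p.1 /\ forall y, p.2 y -> A y}.
apply: open_ext (open_union (fun i : Ix => proj1 (proj2_sig i))) => x; split.
  by case=> [[[y U] [_ [_ UA]]]] /= /UA.
move=> /[dup] Ax /nbhdA [U [oU [Ux UA]]].
by exists (exist _ (x, U) (conj oU (conj Ux UA))).
Qed.

Lemma open_bigI (Ix : Type) (F : Ix -> X -> Prop) (s : list Ix) :
  (forall i, is_open T (F i)) -> is_open T (fun x => forall i, In i s -> F i x).
Proof.
move=> oF; elim: s => [|i s IH].
  by apply: open_ext (open_full T) => x; split => // _ i [].
apply: open_ext (open_inter (oF i) IH) => x; split.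
  by move=> [Fx Fsx] j [<-|/Fsx].
by move=> Fx; split => [|j Hj]; apply: Fx; [left | right].
Qed.

Lemma compact_ext (A B : X -> Prop) : (forall x, A x <-> B x) -> compact T A -> compact T B.
Proof.
move=> AB cA Ix F oF cov.
have [s Hs] := cA Ix F oF (fun x Ax => cov x (proj1 (AB x) Ax)).
by exists s => x /AB /Hs.
Qed.

Lemma compact_empty (A : X -> Prop) : (forall x, ~ A x) -> compact T A.
Proof. by move=> A0 Ix F _ _; exists nil => x /A0. Qed.

Lemma compactU (A B : X -> Prop) : compact T A -> compact T B ->
  compact T (fun x => A x \/ B x).
Proof.
move=> cA cB Ix F oF cov.
have [s1 H1] := cA Ix F oF (fun x Ax => cov x (or_introl Ax)).
have [s2 H2] := cB Ix F oF (fun x Bx => cov x (or_intror Bx)).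
exists (s1 ++ s2) => x [/H1|/H2] [i [Hi Fi]]; exists i; split => //; apply: in_or_app; tauto.
Qed.

(* The complement of [B] is added to any open cover of [B] to cover [A]. *)
Lemma closed_subset_compact (A B : X -> Prop) : compact T A -> (forall x, B x -> A x) ->
  is_open T (fun x => ~ B x) -> compact T B.
Proof.
move=> cA BA oCB Ix F oF cov.
pose F' (o : option Ix) := if o is Some i then F i else fun x => ~ B x.
have oF' : forall o, is_open T (F' o) by case.
have cov' : forall x, A x -> exists o, F' o x.
  move=> x _; case: (classic (B x)) => Bx; last by exists None.
  by have [i Fi] := cov x Bx; exists (Some i).
have [s Hs] := cA _ F' oF' cov'.
exists (pmap id s) => x Bx; have [[i|] [Hi Fi]] := Hs x (BA x Bx) => //.
by exists i; split => //; apply: In_pmap_id.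
Qed.

Lemma compact_closed (C : X -> Prop) : hausdorff T -> compact T C ->
  is_open T (fun x => ~ C x).
Proof.
move=> hX cC; apply: open_nbhd => x nCx.
pose Ix := {p : (X -> Prop) * (X -> Prop) | is_open T p.1 /\ is_open T p.2 /\ p.1 x /\
   forall z, ~ (p.1 z /\ p.2 z)}.
have cov : forall c, C c -> exists i : Ix, (proj1_sig i).2 c.
  move=> c Cc; have nxc : x <> c by move=> E; apply: nCx; rewrite E.
  have [U [V [oU [oV [Ux [Vc UV]]]]]] := hX x c nxc.
  by exists (exist _ (U, V) (conj oU (conj oV (conj Ux UV)))).
have [s Hs] := cC Ix _ (fun i => proj1 (proj2 (proj2_sig i))) cov.
exists (fun z => forall i, In i s -> (proj1_sig i).1 z); split.
  by apply: open_bigI => i; case: (proj2_sig i).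
split=> [i _|z Uz Cz]; first by case: (proj2_sig i) => _ [_ []].
have [i [Hi Vz]] := Hs z Cz.
by case: (proj2_sig i) => _ [_ [_ UV]]; apply: (UV z); split => //; apply: Uz.
Qed.

End Topology.

Section LocallyConstant.
Variables (X : Type) (T : topology X) (K : fieldType).

Lemma locally_constant_comp (op : K -> K) (f : X -> K) : locally_constant T f ->
  locally_constant T (fun y => op (f y)).
Proof. by move=> lf x; have [U [oU [Ux fU]]] := lf x; exists U; do 2!split=> //; move=> y /fU ->. Qed.

Lemma locally_constant_comp2 (op : K -> K -> K) (f g : X -> K) : locally_constant T f ->
  locally_constant T g -> locally_constant T (fun y => op (f y) (g y)).
Proof.
move=> lf lg x; have [U [oU [Ux fU]]] := lf x; have [V [oV [Vx gV]]] := lg x.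
exists (fun y => U y /\ V y); split; first exact: open_inter.
by split=> // y [/fU -> /gV ->].
Qed.

Lemma open_nsupp (f : X -> K) : locally_constant T f -> is_open T (fun x => ~ supp f x).
Proof.
move=> lf; apply: open_nbhd => x nfx; have [U [oU [Ux fU]]] := lf x.
by exists U; do 2!split=> //; move=> y /fU; rewrite /supp => ->.
Qed.

Lemma open_supp (f : X -> K) : locally_constant T f -> is_open T (supp f).
Proof.
move=> lf; apply: open_nbhd => x fx; have [U [oU [Ux fU]]] := lf x.
by exists U; do 2!split=> //; move=> y /fU; rewrite /supp => ->.
Qed.

(* The support of a locally constant function is closed, so [closure] can be dropped. *)
Lemma in_CKE (f : X -> K) : in_CK T f <-> locally_constant T f /\ compact T (supp f).
Proof.
suff closure_supp : locally_constant T f -> forall x, Defs.closure T (supp f) x <-> supp f x.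
  by split=> -[lf cf]; split=> //; apply: compact_ext cf => x; rewrite closure_supp.
move=> lf x; split=> [cx fx0|fx U oU Ux]; last by exists x.
have [U [oU [Ux fU]]] := lf x; have [y [Uy fy]] := cx U oU Ux.
by apply: fy; rewrite (fU y Uy); apply: NNPP.
Qed.

Lemma in_CK_supp_sub (f h : X -> K) : in_CK T h -> locally_constant T f ->
  (forall x, supp f x -> supp h x) -> in_CK T f.
Proof.
move=> /in_CKE [lh ch] lf fh; apply/in_CKE; split=> //.
exact: closed_subset_compact ch fh (open_nsupp lf).
Qed.

Lemma in_CK0 : in_CK T (fun _ : X => 0 : K).
Proof.
apply/in_CKE; split; last by apply: compact_empty => x; apply.
by move=> x; exists (fun _ => True); split=> //; apply: open_full.
Qed.

Lemma in_CKD (f g : X -> K) : in_CK T f -> in_CK T g -> in_CK T (fun y => f y + g y).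
Proof.
move=> /in_CKE [lf cf] /in_CKE [lg cg]; have lfg := locally_constant_comp2 +%R lf lg.
apply/in_CKE; split=> //; apply: closed_subset_compact (compactU cf cg) _ (open_nsupp lfg).
move=> x fgx; apply: NNPP => /not_or_and [/NNPP fx /NNPP gx].
by apply: fgx; rewrite fx gx addr0.
Qed.

Lemma in_CKMl (f g : X -> K) : in_CK T f -> locally_constant T g ->
  in_CK T (fun y => f y * g y).
Proof.
move=> cf lg; apply: in_CK_supp_sub cf (locally_constant_comp2 *%R (proj1 cf) lg) _.
by move=> x fgx fx; apply: fgx; rewrite fx mul0r.
Qed.

Lemma in_CKW0 (W : X -> Prop) : in_CKW T W (fun _ => 0 : K).
Proof. by split=> //; apply: in_CK0. Qed.

Lemma in_CKWD (W : X -> Prop) (f g : X -> K) : in_CKW T W f -> in_CKW T W g ->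
  in_CKW T W (fun y => f y + g y).
Proof. by move=> [cf Wf] [cg Wg]; split=> [|x Wx]; [apply: in_CKD | rewrite Wf // Wg // addr0]. Qed.

Lemma in_CKWN (W : X -> Prop) (f : X -> K) : in_CKW T W f -> in_CKW T W (fun y => - f y).
Proof.
move=> [cf Wf]; split=> [|x Wx]; last by rewrite Wf // oppr0.
apply: in_CK_supp_sub cf (locally_constant_comp -%R (proj1 cf)) _.
by move=> x fx0 fx; apply: fx0; rewrite fx oppr0.
Qed.

Lemma in_CKW_sum (W : X -> Prop) (I : Type) (s : list I) (F : I -> X -> K) :
  (forall i, In i s -> in_CKW T W (F i)) -> in_CKW T W (fun y => \sum_(i <- s) F i y).
Proof.
elim: s => [|i s IH] Fs.
  suff -> : (fun y => \sum_(i <- nil) F i y) = fun _ => 0 by apply: in_CKW0.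
  by apply: functional_extensionality => y; rewrite big_nil.
suff -> : (fun y => \sum_(j <- i :: s) F j y) = fun y => F i y + \sum_(j <- s) F j y.
  by apply: in_CKWD; [apply: Fs; left | apply: IH => j Hj; apply: Fs; right].
by apply: functional_extensionality => y; rewrite big_cons.
Qed.

Definition supp_ind (f : X -> K) : X -> K := fun y => if f y == 0 then 0 else 1.

Lemma supp_ind_mul (f : X -> K) y : supp_ind f y * f y = f y.
Proof. by rewrite /supp_ind; case: eqP => [->|_]; rewrite ?mul0r ?mul1r. Qed.

Lemma in_CK_supp_ind (f : X -> K) : in_CK T f -> in_CK T (supp_ind f).
Proof.
move=> cf; apply: in_CK_supp_sub cf (locally_constant_comp (fun c => if c == 0 then 0 else 1) (proj1 cf)) _.
by move=> x; rewrite /supp /supp_ind; case: eqP.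
Qed.

End LocallyConstant.

Section PartialAction.
Variables (X : Type) (T : topology X) (K : fieldType) (G : Type) (Gs : group_str G)
  (phi : partial_action T Gs).

Local Notation ginv := (ginv Gs).
Local Notation gmul := (gmul Gs).
Local Notation gone := (gone Gs).

Lemma ginvK g : ginv (ginv g) = g.
Proof. by rewrite -[LHS](gmulr1 Gs) -(gmulV Gs g) gmulA gmulV gmul1. Qed.

Lemma ginv1 : ginv gone = gone.
Proof. by rewrite -[LHS](gmulr1 Gs) gmulV. Qed.

Lemma gmulKV g k : gmul g (gmul (ginv g) k) = k.
Proof. by rewrite gmulA gmulrV gmul1. Qed.

Lemma gmulVK g k : gmul (ginv g) (gmul g k) = k.
Proof. by rewrite gmulA gmulV gmul1. Qed.

Lemma actK g z : dom phi (ginv g) z -> act phi (ginv g) (act phi g z) = z.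
Proof.
move=> z_dom; rewrite act_comp // ?gmulV ?act_one //.
by rewrite ginvK gmulV; apply: dom_one.
Qed.

Lemma actVK g x : dom phi g x -> act phi g (act phi (ginv g) x) = x.
Proof.
move=> x_dom; rewrite act_comp ?ginvK ?gmulrV ?act_one //.
exact: dom_one.
Qed.

Lemma dom_actV g x : dom phi g x -> dom phi (ginv g) (act phi (ginv g) x).
Proof. by move=> x_dom; apply: act_into; rewrite ginvK. Qed.

Lemma phi_fun1 (F : X -> K) : phi_fun phi gone F = F.
Proof.
apply: functional_extensionality => x.
by rewrite /phi_fun pif_T ?ginv1 ?act_one //; apply: dom_one.
Qed.

Lemma phi_fun0 g : phi_fun phi g (fun _ => 0 : K) = fun _ => 0.
Proof.
apply: functional_extensionality => x; rewrite /phi_fun.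
by case: (classic (dom phi g x)) => x_dom; [rewrite pif_T | rewrite pif_F].
Qed.

Lemma phi_funK g (F : X -> K) : (forall x, ~ dom phi g x -> F x = 0) ->
  phi_fun phi g (phi_fun phi (ginv g) F) = F.
Proof.
move=> F0; apply: functional_extensionality => x; rewrite /phi_fun.
case: (classic (dom phi g x)) => x_dom; last by rewrite pif_F // F0.
by rewrite pif_T // pif_T ?ginvK ?actVK //; apply: dom_actV.
Qed.

Lemma phi_funVK g (F : X -> K) : (forall x, ~ dom phi (ginv g) x -> F x = 0) ->
  phi_fun phi (ginv g) (phi_fun phi g F) = F.
Proof. by move=> F0; rewrite -{2}[g]ginvK phi_funK. Qed.

Lemma supp_phi_fun g (F : X -> K) x :
  supp (phi_fun phi g F) x <-> dom phi g x /\ supp F (act phi (ginv g) x).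
Proof.
rewrite /supp /phi_fun.
by case: (classic (dom phi g x)) => x_dom; [rewrite pif_T | rewrite pif_F]; tauto.
Qed.

Lemma compact_supp_phi_fun g (F : X -> K) : compact T (supp F) ->
  (forall y, ~ dom phi (ginv g) y -> F y = 0) -> compact T (supp (phi_fun phi g F)).
Proof.
move=> cF F0; apply: (compact_ext (fun x => iff_sym (supp_phi_fun g F x))) => Ix U oU cov.
pose U' i z := dom phi (ginv g) z /\ U i (act phi g z).
have cov' : forall z, supp F z -> exists i, U' i z.
  move=> z Fz; have z_dom : dom phi (ginv g) z by apply: NNPP => /F0.
  have [|i Ui] := cov (act phi g z); last by exists i.
  by split; [apply: act_into | rewrite actK].
have [s Hs] := cF Ix U' (fun i => act_cont phi g (oU i)) cov'.
exists s => x [x_dom Fx]; have [i [Hi [_ Ux]]] := Hs _ Fx.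
by exists i; rewrite actVK in Ux.
Qed.

(* Near a point outside [X_g], [phi_g F] vanishes on the complement of its compact,
   hence closed, support. *)
Lemma locally_constant_phi_fun g (F : X -> K) : hausdorff T -> in_CK T F ->
  (forall y, ~ dom phi (ginv g) y -> F y = 0) -> locally_constant T (phi_fun phi g F).
Proof.
move=> hX /in_CKE [lF cF] F0 x; case: (classic (dom phi g x)) => x_dom.
  have [U [oU [Ux FU]]] := lF (act phi (ginv g) x).
  exists (fun y => dom phi (ginv (ginv g)) y /\ U (act phi (ginv g) y)).
  split; first exact: act_cont.
  split=> [|y]; first by rewrite ginvK.
  by rewrite ginvK => -[y_dom /FU Fy]; rewrite /phi_fun !pif_T.
exists (fun y => ~ supp (phi_fun phi g F) y).
split; first exact/compact_closed/compact_supp_phi_fun.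
split=> [/supp_phi_fun [] //|y /NNPP ->].
by rewrite /phi_fun pif_F.
Qed.

Lemma in_CKW_phi_fun g (F : X -> K) : hausdorff T -> in_CKW T (dom phi (ginv g)) F ->
  in_CKW T (dom phi g) (phi_fun phi g F).
Proof.
move=> hX [cF F0]; split=> [|x x_dom]; last by rewrite /phi_fun pif_F.
apply/in_CKE; split; first exact: locally_constant_phi_fun.
by apply: compact_supp_phi_fun => //; case/in_CKE: cF.
Qed.

Definition partial_mul g (A B : X -> K) : X -> K :=
  phi_fun phi g (fun y => phi_fun phi (ginv g) A y * B y).

Lemma partial_mul0r g (A : X -> K) : partial_mul g A (fun _ => 0) = fun _ => 0.
Proof.
rewrite /partial_mul -[RHS](phi_fun0 g); congr phi_fun.
by apply: functional_extensionality => y; rewrite mulr0.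
Qed.

Lemma in_CKW_phi_fun_mul g (A B : X -> K) : hausdorff T ->
  in_CKW T (dom phi g) A -> locally_constant T B ->
  in_CKW T (dom phi (ginv g)) (fun y => phi_fun phi (ginv g) A y * B y).
Proof.
move=> hX WA lB.
have [cA' A'0] : in_CKW T (dom phi (ginv g)) (phi_fun phi (ginv g) A).
  by apply: in_CKW_phi_fun => //; rewrite ginvK.
by split=> [|y /A'0 ->]; [apply: in_CKMl | rewrite mul0r].
Qed.

Lemma in_CKW_partial_mul g k (A B : X -> K) : hausdorff T ->
  in_CKW T (dom phi g) A -> in_CKW T (dom phi (gmul (ginv g) k)) B ->
  in_CKW T (dom phi k) (partial_mul g A B).
Proof.
move=> hX WA [cB B0]; have WAB := in_CKW_phi_fun_mul hX WA (proj1 cB).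
split=> [|x x_dom]; first exact: (proj1 (in_CKW_phi_fun hX WAB)).
apply: NNPP => /supp_phi_fun [xg ABx]; apply: x_dom.
set y := act phi (ginv g) x in ABx.
have y_dom : dom phi (gmul (ginv g) k) y by apply: NNPP => /B0 By; apply: ABx; rewrite By mulr0.
have [_] := proj2 (act_dom phi g (gmul (ginv g) k) x)
  (ex_intro _ y (conj (dom_actV xg) (conj y_dom (actVK xg)))).
by rewrite gmulKV.
Qed.

End PartialAction.

Section SkewRing.
Variables (X : Type) (T : topology X) (K : fieldType) (G : Type) (Gs : group_str G)
  (phi : partial_action T Gs).

Local Notation ginv := (ginv Gs).
Local Notation gmul := (gmul Gs).
Local Notation gone := (gone Gs).

Definition single (g : G) (h : X -> K) : pskew X K G := fun k => pif (k = g) h (fun _ => 0).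

Lemma delta_oneE (f : X -> K) : delta_one Gs f = single gone f.
Proof. by []. Qed.

Lemma single_at g h : single g h g = h.
Proof. by rewrite /single pif_T. Qed.

Lemma single_off g h k : k <> g -> single g h k = fun _ => 0.
Proof. by move=> kg; rewrite /single pif_F. Qed.

Lemma supp_list_single g h : supp_list (single g h) (g :: nil).
Proof.
split; first by constructor; [case | constructor].
by move=> k kg x; rewrite single_off // => E; apply: kg; left.
Qed.

Lemma single_in_CKW (W : G -> X -> Prop) g h : in_CKW T (W g) h ->
  forall k, in_CKW T (W k) (single g h k).
Proof.
move=> Wh k; case: (classic (k = g)) => [->|kg]; first by rewrite single_at.
by rewrite single_off //; apply: in_CKW0.
Qed.

Lemma in_skew_single g h : in_CKW T (dom phi g) h -> in_skew phi (single g h).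
Proof.
move=> Wh; split; first by exists (g :: nil); apply: supp_list_single.
exact: (single_in_CKW (W := dom phi)).
Qed.

Lemma in_skew_V_single (V : X -> Prop) g h : in_CKW T (fun x => V x /\ dom phi g x) h ->
  in_skew_V phi V (single g h).
Proof.
move=> Wh; split; first by exists (g :: nil); apply: supp_list_single.
exact: (single_in_CKW (W := fun k x => V x /\ dom phi k x)).
Qed.

Lemma single0 g : single g (fun _ => 0) = @skew0 X K G.
Proof.
apply: functional_extensionality => k.
by case: (classic (k = g)) => [->|kg]; rewrite ?single_at ?single_off.
Qed.

Lemma skew_add_single g (h1 h2 : X -> K) :
  skew_add (single g h1) (single g h2) = single g (fun y => h1 y + h2 y).
Proof.
apply: functional_extensionality => k; apply: functional_extensionality => x.
rewrite /skew_add; case: (classic (k = g)) => [->|kg]; first by rewrite !single_at.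
by rewrite !single_off // addr0.
Qed.

Lemma skew_mul_single g h (A B : X -> K) :
  skew_mul phi (g :: nil) (single g A) (single h B) = single (gmul g h) (partial_mul phi g A B).
Proof.
apply: functional_extensionality => k.
have -> : skew_mul phi (g :: nil) (single g A) (single h B) k =
    partial_mul phi g A (single h B (gmul (ginv g) k)).
  by apply: functional_extensionality => x; rewrite /skew_mul big_seq1 single_at.
case: (classic (k = gmul g h)) => [->|kgh]; first by rewrite gmulVK !single_at.
rewrite (single_off _ kgh) single_off ?partial_mul0r // => E.
by apply: kgh; rewrite -E gmulKV.
Qed.

Lemma exists_supp_list (c : pskew X K G) s : (forall g, ~ In g s -> forall x, c g x = 0) ->
  exists s', supp_list c s'.
Proof.
move=> cs; pose dec := fun g h : G => excluded_middle_informative (g = h).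
exists (nodup dec s); split=> [|g g_s]; first exact: NoDup_nodup.
by apply: cs => /(nodup_In dec).
Qed.

Lemma exists_supp_list_skew_mul s (a b : pskew X K G) sb : supp_list b sb ->
  exists s', supp_list (skew_mul phi s a b) s'.
Proof.
move=> [_ b0]; apply: (exists_supp_list (s := flat_map (fun g => map (gmul g) sb) s)).
move=> k k_s x; apply: sum_In_eq0 => g g_s.
suff -> : b (gmul (ginv g) k) = fun _ => 0 by rewrite -/(partial_mul phi g _ _) partial_mul0r.
apply: functional_extensionality => y; apply: b0 => gk_sb; apply: k_s.
apply/in_flat_map; exists g; split=> //.
by apply/in_map_iff; exists (gmul (ginv g) k); rewrite gmulKV.
Qed.

Lemma skew_single_ind (P : pskew X K G -> Prop) (a : pskew X K G) s :
  P (@skew0 X K G) -> (forall b c, P b -> P c -> P (skew_add b c)) ->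
  (forall g, P (single g (a g))) -> (forall g, ~ In g s -> forall x, a g x = 0) -> P a.
Proof.
move=> P0 PD; elim: s a => [|g s IH] a Pa a0.
  suff -> : a = @skew0 X K G by [].
  by apply: functional_extensionality => k; apply: functional_extensionality; apply: a0.
pose a' : pskew X K G := fun k => pif (k = g) (fun _ => 0) (a k).
have a'_off : forall k, k <> g -> a' k = a k by move=> k kg; rewrite /a' pif_F.
have -> : a = skew_add (single g (a g)) a'.
  apply: functional_extensionality => k; apply: functional_extensionality => x.
  rewrite /skew_add; case: (classic (k = g)) => [->|kg].
    by rewrite single_at /a' pif_T // addr0.
  by rewrite single_off // a'_off // add0r.
apply: PD => //; apply: IH => [k|k k_s x].
  case: (classic (k = g)) => [->|kg]; last by rewrite a'_off.
  by rewrite /a' pif_T // single0.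
case: (classic (k = g)) => [->|kg]; first by rewrite /a' pif_T.
by rewrite a'_off // a0 // => -[E|]; [apply: kg | apply: k_s].
Qed.

End SkewRing.

Section Ideal.
Variables (X : Type) (T : topology X) (K : fieldType) (G : Type) (Gs : group_str G)
  (phi : partial_action T Gs) (hX : hausdorff T)
  (J : pskew X K G -> Prop) (hJ : is_ideal phi J).

Local Notation ginv := (ginv Gs).
Local Notation gone := (gone Gs).

Lemma ideal_in_CK (f : X -> K) : J (delta_one Gs f) -> in_CK T f.
Proof. by case: hJ => J_skew _ /J_skew [_ /(_ gone)]; rewrite delta_oneE single_at => -[]. Qed.

Lemma ideal_delta_one_mul (f : X -> K) g h : J (delta_one Gs f) -> in_CKW T (dom phi g) h ->
  J (single g (fun y => f y * h y)).
Proof.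
case: hJ => _ [_ [_ [_ [_ J_mulr]]]] Jf Wh.
have := J_mulr _ _ _ Jf (supp_list_single gone f) (in_skew_single Wh).
by rewrite skew_mul_single gmul1 /partial_mul ginv1 !phi_fun1.
Qed.

Lemma ideal_delta_one_phi_fun g (F : X -> K) : in_CKW T (dom phi (ginv g)) F ->
  J (single (ginv g) F) -> J (delta_one Gs (phi_fun phi g F)).
Proof.
case: hJ => _ [_ [_ [_ [J_mull _]]]] [cF F0] JF.
have W1 : in_CKW T (dom phi (ginv g)) (supp_ind F).
  split=> [|y /F0]; first exact: in_CK_supp_ind.
  by rewrite /supp_ind => ->; rewrite eqxx.
have := J_mull _ _ _ (in_skew_single (in_CKW_phi_fun hX W1)) (supp_list_single _ _) JF.
rewrite skew_mul_single gmulrV /partial_mul phi_funVK; last exact: W1.2.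
suff -> : (fun y => supp_ind F y * F y) = F by [].
by apply: functional_extensionality => y; apply: supp_ind_mul.
Qed.

End Ideal.

Section IdealSupport.
Variables (X : Type) (T : topology X) (K : fieldType) (G : Type) (Gs : group_str G)
  (phi : partial_action T Gs) (hX : hausdorff T)
  (I : pskew X K G -> Prop) (hI : is_ideal phi I).

Local Notation ginv := (ginv Gs).
Local Notation gmul := (gmul Gs).
Local Notation V := (V_of Gs I).

(* Peel off one [f] at a time: [h = f (h / f) + h (1 - f / f)], where the first
   summand is [f delta_1 * (h / f) delta_g] and the second vanishes on [supp f]. *)
Lemma ideal_single_of_supp_cover (L : list (X -> K)) :
  (forall f, In f L -> I (delta_one Gs f)) ->
  forall g h, in_CKW T (dom phi g) h ->
  (forall x, supp h x -> exists f, In f L /\ supp f x) -> I (single g h).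
Proof.
case: hI => _ [I0 [I_add _]].
elim: L => [|f L IH] IL g h [ch h0] cov.
  suff -> : h = fun _ => 0 by rewrite single0.
  by apply: functional_extensionality => x; apply: NNPP => /cov [? []].
have If : I (delta_one Gs f) by apply: IL; left.
have lf := proj1 (ideal_in_CK hI If); have lh := proj1 ch.
pose b y := h y * (f y)^-1.
pose h' y := h y * (1 - f y * (f y)^-1).
have -> : h = fun y => f y * b y + h' y.
  by apply: functional_extensionality => y; rewrite /b /h' mulrCA mulrBr addrC subrK mulr1.
rewrite -skew_add_single; apply: I_add.
  apply: (ideal_delta_one_mul hI If); split=> [|x /h0]; last by rewrite /b => ->; rewrite mul0r.
  exact: in_CKMl ch (locally_constant_comp GRing.inv lf).
apply: IH => [f' f'_L||x h'x]; first by apply: IL; right.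
  split=> [|x /h0]; last by rewrite /h' => ->; rewrite mul0r.
  exact: in_CKMl ch (locally_constant_comp (fun c => 1 - c * c^-1) lf).
have hx : supp h x by move=> hx0; apply: h'x; rewrite /h' hx0 mul0r.
have nfx : ~ supp f x by move=> fx; apply: h'x; rewrite /h' mulfV ?subrr ?mulr0 //; apply/eqP.
by have [f' [[<-|f'_L] f'x]] := cov x hx; [|exists f'].
Qed.

Lemma ideal_single_V g (h : X -> K) : in_CKW T (fun x => V x /\ dom phi g x) h -> I (single g h).
Proof.
move=> [ch h0]; case/in_CKE: (ch) => _ cs.
pose Ix := {f : X -> K | I (delta_one Gs f)}.
have oIx (i : Ix) : is_open T (supp (proj1_sig i)).
  exact/open_supp/(proj1 (ideal_in_CK hI (proj2_sig i))).
have cov x : supp h x -> exists i : Ix, supp (proj1_sig i) x.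
  move=> hx; have [[f [If fx]] _] : V x /\ dom phi g x by apply: NNPP => /h0.
  by exists (exist _ f If).
have [s Hs] := cs Ix _ oIx cov.
apply: (ideal_single_of_supp_cover (L := map (@proj1_sig _ _) s)).
- by move=> f /in_map_iff [[f' If'] [/= <- _]].
- by split=> // x xg; apply: h0 => -[].
- by move=> x /Hs [i [i_s ix]]; exists (proj1_sig i); split=> //; apply: in_map.
Qed.

Lemma in_skew_V_sub (a : pskew X K G) : in_skew_V (K:=K) phi V a -> I a.
Proof.
case: hI => _ [I0 [I_add _]] [[s [_ a0]] Wa].
exact: (skew_single_ind I0 I_add (fun g => ideal_single_V (Wa g)) a0).
Qed.

(* Invariance of [V]: [F delta_{g^-1}] lies in [I], hence so does [phi_g(F) delta_1]. *)
Lemma in_CKW_V_phi_fun g (F : X -> K) : in_CKW T (fun x => V x /\ dom phi (ginv g) x) F ->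
  in_CKW T (fun x => V x /\ dom phi g x) (phi_fun phi g F).
Proof.
move=> WF; have [cF F0] := WF.
have WF' : in_CKW T (dom phi (ginv g)) F by split=> // x xg; apply: F0 => -[].
have [c phiF0] := in_CKW_phi_fun hX WF'.
have IphiF := ideal_delta_one_phi_fun hX hI WF' (ideal_single_V WF).
split=> // x Vx; apply: NNPP => phiFx; apply: Vx; split; last by apply: NNPP => /phiF0.
by exists (phi_fun phi g F).
Qed.

Lemma in_CKW_V_partial_mul g k (A B : X -> K) :
  in_CKW T (dom phi g) A -> in_CKW T (dom phi (gmul (ginv g) k)) B ->
  (forall x, ~ V x -> phi_fun phi (ginv g) A x * B x = 0) ->
  in_CKW T (fun x => V x /\ dom phi k x) (partial_mul phi g A B).
Proof.
move=> WA WB AB0; have [c AB_k] := in_CKW_partial_mul hX WA WB.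
have [cAB AB_g] := in_CKW_phi_fun_mul hX WA (proj1 (proj1 WB)).
have [_ AB_V] : in_CKW T (fun x => V x /\ dom phi g x) (partial_mul phi g A B).
  apply: in_CKW_V_phi_fun; split=> // x Vx.
  by case: (classic (V x)) => [Vx'|/AB0 //]; apply: AB_g => xg; apply: Vx.
split=> // x Vk; case: (classic (V x)) => [Vx|nVx]; last by apply: AB_V => -[].
by apply: AB_k => xk; apply: Vk.
Qed.

Lemma in_skew_V_in_skew (a : pskew X K G) : in_skew_V (K:=K) phi V a -> in_skew phi a.
Proof. by move=> [sa Wa]; split=> // g; have [ca a0] := Wa g; split=> // x xg; apply: a0 => -[]. Qed.

Lemma in_skew_V_skew_mul s (a b : pskew X K G) : in_skew phi a -> in_skew phi b ->
  (forall g k x, ~ V x -> phi_fun phi (ginv g) (a g) x * b (gmul (ginv g) k) x = 0) ->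
  in_skew_V (K:=K) phi V (skew_mul phi s a b).
Proof.
move=> [_ Wa] [[sb sbb] Wb] ab0; split; first exact: exists_supp_list_skew_mul sbb.
move=> k; apply: (in_CKW_sum (F := fun g => partial_mul phi g (a g) (b (gmul (ginv g) k)))).
by move=> g _; apply: in_CKW_V_partial_mul (Wa g) (Wb _) (ab0 g k).
Qed.

Lemma is_ideal_skew_V : is_ideal phi (in_skew_V (K:=K) phi V).
Proof.
split; first exact: in_skew_V_in_skew.
split; first by split=> [|g]; [exists nil; split=> //; constructor | apply: in_CKW0].
split.
  move=> a b [[sa [_ a0]] Wa] [[sb [_ b0]] Wb]; split=> [|g]; last exact: in_CKWD.
  apply: (exists_supp_list (s := sa ++ sb)) => g g_s x.
  by rewrite /skew_add a0 ?b0 ?addr0 // => ?; apply: g_s; apply: in_or_app; tauto.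
split.
  move=> a [[sa [_ a0]] Wa]; split=> [|g]; last exact: in_CKWN.
  by apply: (exists_supp_list (s := sa)) => g g_s x; rewrite /skew_opp a0 ?oppr0.
split.
  move=> a b s Sa _ Vb; apply: in_skew_V_skew_mul (in_skew_V_in_skew Vb) _ => // g k x Vx.
  by rewrite (proj2 (proj2 Vb _)) ?mulr0 // => -[].
move=> a b s Va _ Sb; apply: in_skew_V_skew_mul (in_skew_V_in_skew Va) Sb _ => g k x Vx.
have Wa : in_CKW T (fun y => V y /\ dom phi (ginv (ginv g)) y) (a g) by rewrite ginvK; apply: Va.2.
by rewrite (proj2 (in_CKW_V_phi_fun Wa)) ?mul0r // => -[].
Qed.

Lemma is_graded_skew_V : is_graded (in_skew_V (K:=K) phi V).
Proof. by move=> a g [_ Wa]; apply: in_skew_V_single. Qed.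

Lemma graded_ideal_sub_skew_V (J : pskew X K G -> Prop) : is_ideal phi J -> is_graded J ->
  (forall a, J a -> I a) -> forall a, J a -> in_skew_V (K:=K) phi V a.
Proof.
move=> hJ gJ JI a Ja; have [[s sa] Wa] := proj1 hJ a Ja.
split=> [|g]; first by exists s.
have [ca a0] := Wa g; split=> // x nVx.
have Wa' : in_CKW T (dom phi (ginv (ginv g))) (a g) by rewrite ginvK.
have Ja' : J (single (ginv (ginv g)) (a g)) by rewrite ginvK; apply: gJ.
have /JI Ia := ideal_delta_one_phi_fun hX hJ Wa' Ja'.
have [cF F0] := in_CKW_phi_fun hX Wa'.
have WF : in_CKW T (fun y => V y /\ dom phi (ginv g) y) (phi_fun phi (ginv g) (a g)).
  split=> // y nVy; apply: NNPP => Fy; apply: nVy; split; last by apply: NNPP => /F0.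
  by exists (phi_fun phi (ginv g) (a g)).
have [_ aV] := in_CKW_V_phi_fun WF; rewrite phi_funK // in aV.
exact: aV.
Qed.

End IdealSupport.

Theorem mainTheorem9 (X : Type) (T : topology X)
  (hX : hausdorff T) (lcX : locally_compact T) (tdX : totally_disconnected T)
  (G : Type) (Gs : group_str G) (K : fieldType) (phi : partial_action T Gs)
  (I : pskew X K G -> Prop) (hI : is_ideal phi I) :
  let V := V_of Gs I in
  (forall a, in_skew_V (K:=K) phi V a -> I a) /\
  is_ideal phi (in_skew_V (K:=K) phi V) /\
  is_graded (in_skew_V (K:=K) phi V) /\
  (forall J : pskew X K G -> Prop, is_ideal phi J -> is_graded J ->
     (forall a, J a -> I a) -> forall a, J a -> in_skew_V (K:=K) phi V a).
Proof.
move=> V; split; first exact: in_skew_V_sub.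
split; first exact: is_ideal_skew_V.
split; first exact: is_graded_skew_V.
exact: graded_ideal_sub_skew_V.
Qed.
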